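(* Let $D$ be a division ring with center $F$ such that $D$ is algebraic over $F$. Then $D$ has no maximal subrings if and only if $D=F$ is a field without maximal subrings.
   Context: All rings are associative unital and subrings share the identity. A maximal subring of a ring $T$ is a proper subring maximal under inclusion among proper subrings of $T$. *)

From mathcomp Require Import all_boot all_algebra.
Set Implicit Arguments. Unset Strict Implicit. Unset Printing Implicit Defensive.
Import GRing.Theory.
Local Open Scope ring_scope.

Definition is_division_ring (D : unitRingType) : Prop :=
  forall x : D, x != 0 -> x \is a GRing.unit.

Definition central (R : pzRingType) (x : R) : Prop := forall y : R, x * y = y * x.

Definition algebraic_over_center (R : nzRingType) : Prop :=
  forall x : R, exists p : {poly R},
    p != 0 /\ (forall i, central p`_i) /\ p.[x] = 0.

Definition is_subring (R : pzRingType) (S : R -> Prop) : Prop :=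
  [/\ S 1,
      (forall x y, S x -> S y -> S (x - y)) &
      (forall x y, S x -> S y -> S (x * y))].

Definition proper_subring (R : pzRingType) (S : R -> Prop) : Prop :=
  is_subring S /\ exists x : R, ~ S x.

Definition maximal_subring (R : pzRingType) (S : R -> Prop) : Prop :=
  proper_subring S /\
  forall T : R -> Prop, proper_subring T -> (forall x, S x -> T x) ->
    forall x, T x -> S x.

Definition has_no_maximal_subrings (R : pzRingType) : Prop :=
  ~ exists S : R -> Prop, maximal_subring S.

(* If a is not central, its centralizer K is a proper division subring, and D
   is finite dimensional as a right K-vector space.  Indeed, let p be a nonzero
   central polynomial of degree n with p(a) = 0 and let e_1, ..., e_m be given
   with m > n.  The n equations sum_i e_i a^k c_i = 0 (k < n) have a nonzero
   solution c in D^m; since p has central coefficients, c then solves these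
   equations for every k.  The solutions are stable under right scaling and
   under c |-> a c - c a, so a normalised solution of minimal support has all
   its entries in K, i.e. the e_i are right K-dependent.
   Now take, among the proper subrings containing K, one containing a right
   K-free family of the largest possible size d <= n.  It is maximal: any
   element x of a larger proper subring, appended to the family, would give a
   free family of size d + 1, because a dependence relation would express x
   through the family and K, putting x in the subring. *)

From mathcomp Require Import all_boot all_algebra.
From mathcomp Require Import zify.
From Stdlib Require Import Classical.
Set Implicit Arguments. Unset Strict Implicit. Unset Printing Implicit Defensive.
Import GRing.Theory.
Local Open Scope ring_scope.

Section SubringClosure.
Variables (R : pzRingType) (S : R -> Prop).
Hypothesis S_subring : is_subring S.

Lemma subring0 : S 0.
Proof. by case: S_subring => S1 SB _; rewrite -(subrr 1); apply: SB. Qed.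

Lemma subringN x : S x -> S (- x).
Proof.
by case: S_subring => _ SB _ Sx; rewrite -sub0r; apply: SB => //; apply: subring0.
Qed.

Lemma subringD x y : S x -> S y -> S (x + y).
Proof.
by case: S_subring => _ SB _ Sx Sy; rewrite -(opprK y); apply: SB => //; apply: subringN.
Qed.

Lemma subringM x y : S x -> S y -> S (x * y).
Proof. by case: S_subring => _ _; apply. Qed.

Lemma subring_sum (I : Type) (r : seq I) (P : pred I) (F : I -> R) :
  (forall i, P i -> S (F i)) -> S (\sum_(i <- r | P i) F i).
Proof. by apply: big_ind; [exact: subring0 | exact: subringD]. Qed.

End SubringClosure.

Definition centralizer (R : pzRingType) (a : R) : R -> Prop := GRing.comm a.

Lemma centralizer_subring (R : pzRingType) (a : R) : is_subring (centralizer a).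
Proof. by split=> [|x y|x y]; [exact: commr1 | exact: commrB | exact: commrM]. Qed.

Lemma centralizer_proper (R : pzRingType) (a : R) :
  ~ central a -> proper_subring (centralizer a).
Proof.
move=> a_noncentral; split; first exact: centralizer_subring.
by apply: not_all_ex_not.
Qed.

Definition right_free (R : pzRingType) (K : R -> Prop) m (e : 'I_m -> R) :=
  forall c : 'I_m -> R, (forall i, K (c i)) -> \sum_i e i * c i = 0 ->
    forall i, c i = 0.

Definition extend_family (T : Type) m (e : 'I_m -> T) (x : T) (i : 'I_m.+1) :=
  if unlift ord_max i is Some j then e j else x.

Lemma exists_max_bounded_nat (P : nat -> Prop) N :
  P 0%N -> (forall d, P d -> (d <= N)%N) ->
  exists d, P d /\ forall d', P d' -> (d' <= d)%N.
Proof.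
elim: N => [|N IH] P0 P_le; first by exists 0%N; split=> // d /P_le.
have [PN1|notPN1] := classic (P N.+1); first by exists N.+1.
apply: IH => // d Pd; move: (P_le d Pd); rewrite leq_eqVlt => /orP [/eqP Ed|//].
by case: notPN1; rewrite -Ed.
Qed.

Definition power_sum (R : pzRingType) (I : finType) (a : R) (e c : I -> R) k :=
  \sum_i e i * a ^+ k * c i.

Lemma power_sum_recurrence (R : nzRingType) (I : finType) (a : R) (p : {poly R})
    (e c : I -> R) k :
  (forall j, central p`_j) ->
  \sum_(j < size p) p`_j * power_sum a e c (j + k) =
    \sum_i e i * (p.[a] * a ^+ k) * c i.
Proof.
move=> p_central; under eq_bigr do rewrite mulr_sumr.
rewrite exchange_big; apply: eq_bigr => i _.
rewrite horner_coef mulr_suml mulr_sumr mulr_suml; apply: eq_bigr => j _.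
by rewrite exprD !mulrA (p_central j (e i)).
Qed.

Lemma linear_recurrence_eq0 (R : unitRingType) (p : {poly R}) (G : nat -> R) :
  lead_coef p \is a GRing.unit ->
  (forall k, \sum_(j < size p) p`_j * G (j + k)%N = 0) ->
  (forall k, (k < (size p).-1)%N -> G k = 0) ->
  forall k, G k = 0.
Proof.
have [->|p_neq0] := eqVneq p 0; first by rewrite lead_coef0 unitr0.
move=> lc_unit rec init.
have [n size_p] : {n | size p = n.+1}.
  by exists (size p).-1; rewrite prednK // lt0n size_poly_eq0.
rewrite lead_coefE size_p /= in lc_unit; rewrite size_p /= in init.
elim/ltn_ind=> k IH; have [/init //|le_nk] := ltnP k n.
move: (rec (k - n)%N); rewrite size_p big_ord_recr /= big1 ?add0r.
  rewrite subnKC // => /(congr1 (fun x => (p`_n)^-1 * x)).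
  by rewrite mulr0 mulKr.
move=> j _; rewrite IH ?mulr0 //; have := ltn_ord j; lia.
Qed.

Section DivisionRing.
Variable D : unitRingType.
Hypothesis D_division : is_division_ring D.

Lemma right_free_extend (K S : D -> Prop) m (e : 'I_m -> D) x :
  is_subring S -> (forall y, K y -> S y) -> (forall y, K y -> K y^-1) ->
  (forall i, S (e i)) -> right_free K e -> ~ S x ->
  right_free K (extend_family e x).
Proof.
move=> S_subring KS K_inv Se e_free Snx c Kc.
have widen_lift j : widen_ord (leqnSn m) j = lift ord_max j.
  by apply: val_inj; rewrite [RHS]lift_max.
rewrite big_ord_recr /=.
under eq_bigr do rewrite widen_lift /extend_family liftK.
rewrite /extend_family unlift_none => sum0.
have [cx0|cx_neq0] := eqVneq (c ord_max) 0.
  move: sum0; rewrite cx0 mulr0 addr0 => /(e_free _ (fun j => Kc _)) c0 i.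
  by case: (unliftP ord_max i) => [j ->|->].
exfalso; apply: Snx.
have cx_unit := D_division cx_neq0.
have -> : x = - (\sum_(j < m) e j * c (lift ord_max j)) * (c ord_max)^-1.
  apply: (mulIr cx_unit); rewrite mulrVK //.
  by apply/eqP; rewrite -addr_eq0 addrC sum0.
apply: (subringM S_subring); last exact/KS/K_inv.
apply/(subringN S_subring)/(subring_sum S_subring) => j _.
exact/(subringM S_subring)/KS.
Qed.

Lemma maximal_subring_of_bounded_right_free (K : D -> Prop) N :
  proper_subring K -> (forall y, K y -> K y^-1) ->
  (forall m (e : 'I_m -> D), right_free K e -> (m <= N)%N) ->
  exists S : D -> Prop, maximal_subring S.
Proof.
move=> K_proper K_inv K_bounded.
pose admissible d := exists2 S, proper_subring S /\ (forall y, K y -> S y) &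
  exists2 e : 'I_d -> D, (forall i, S (e i)) & right_free K e.
have admissible0 : admissible 0%N.
  exists K => //; exists (fun _ => 0) => [_|c _ _ []//].
  exact: subring0 K_proper.1.
have admissible_le d : admissible d -> (d <= N)%N.
  by case=> S _ [e _]; apply: K_bounded.
have [d [[S [S_proper KS] [e Se e_free]] d_max]] :=
  exists_max_bounded_nat admissible0 admissible_le.
exists S; split=> // S' S'_proper SS' x S'x; apply: NNPP => Snx.
suff /d_max : admissible d.+1 by rewrite ltnn.
exists S'; first by split=> // y /KS /SS'.
exists (extend_family e x).
  by move=> i; rewrite /extend_family; case: unliftP => [j _|_]; [apply/SS'/Se|].
exact: right_free_extend S_proper.1 KS K_inv Se e_free Snx.
Qed.

Lemma homogeneous_system_nontrivial (I : finType) N :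
  forall (f : nat -> I -> D) (S : {set I}), (N < #|S|)%N ->
  exists c : I -> D, [/\ exists i, c i != 0, forall i, i \notin S -> c i = 0
    & forall j, (j < N)%N -> \sum_i f j i * c i = 0].
Proof.
have sum_delta (F : I -> D) i0 : \sum_i F i * (i == i0)%:R = F i0.
  rewrite (bigD1 i0) //= eqxx mulr1 big1 ?addr0 // => i /negPf ->.
  by rewrite mulr0.
elim: N => [|N IH] f S ltNS.
  case/card_gt0P: ltNS => i0 Si0; exists (fun i => (i == i0)%:R); split=> //.
    by exists i0; rewrite eqxx oner_neq0.
  by move=> i; case: eqP => // ->; rewrite Si0.
case: (pickP [pred i in S | f 0%N i != 0]) => [i0 /andP [Si0 r_neq0]|f0_eq0];
    last first.
  have [c [c_nz c_supp c_eq]] := IH (fun j => f j.+1) S (ltnW ltNS).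
  exists c; split=> // -[_|j /c_eq //]; rewrite big1 // => i _.
  have [Si|/c_supp ->] := boolP (i \in S); last by rewrite mulr0.
  by move: (f0_eq0 i); rewrite /= Si => /negbFE/eqP ->; rewrite mul0r.
(* Gaussian elimination of the unknown [i0] using equation [0]. *)
set r := f 0%N i0 in r_neq0.
pose g j i := f j.+1 i - f j.+1 i0 * r^-1 * f 0%N i.
have ltNS' : (N < #|S :\ i0|)%N by move: ltNS; rewrite (cardsD1 i0) Si0.
have [c' [[i1 c'i1_neq0] c'_supp c'_eq]] := IH g _ ltNS'.
have c'i0 : c' i0 = 0 by apply: c'_supp; rewrite setD11.
pose s := \sum_i f 0%N i * c' i.
pose t := - (r^-1 * s).
have sum_shift (F : I -> D) :
    \sum_i F i * (c' i + (i == i0)%:R * t) = \sum_i F i * c' i + F i0 * t.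
  under eq_bigr do rewrite mulrDr mulrA.
  by rewrite big_split /= -mulr_suml sum_delta.
exists (fun i => c' i + (i == i0)%:R * t); split.
- exists i1; case: (i1 =P i0) => [i10|_]; last by rewrite mul0r addr0.
  by rewrite i10 c'i0 eqxx in c'i1_neq0.
- move=> i Si; case: (i =P i0) => [i0E|/eqP i_neq_i0].
    by rewrite i0E Si0 in Si.
  by rewrite mul0r addr0 c'_supp // !inE i_neq_i0.
move=> [_|j /c'_eq]; rewrite sum_shift.
  by rewrite /t mulrN mulrA mulrV ?mul1r ?subrr // D_division.
have -> : \sum_i f j.+1 i * c' i = \sum_i g j i * c' i + f j.+1 i0 * r^-1 * s.
  rewrite /s mulr_sumr -big_split; apply: eq_bigr => i _.
  by rewrite /= mulrBl !mulrA subrK.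
by move=> ->; rewrite add0r /t !mulrN mulrA subrr.
Qed.

Lemma power_sum_eq0 (I : finType) (a : D) (p : {poly D}) (e c : I -> D) :
  p != 0 -> (forall j, central p`_j) -> p.[a] = 0 ->
  (forall k, (k < (size p).-1)%N -> power_sum a e c k = 0) ->
  forall k, power_sum a e c k = 0.
Proof.
move=> p_neq0 p_central pa init; apply: (linear_recurrence_eq0 (p := p)) => //.
  by apply: D_division; rewrite lead_coef_eq0.
move=> k; rewrite power_sum_recurrence // pa mul0r.
by rewrite big1 // => i _; rewrite mulr0 mul0r.
Qed.

Lemma ad_stable_centralizing_vector (I : finType) (a : D) (P : (I -> D) -> Prop) :
  (forall c r, P c -> P (fun i => c i * r)) ->
  (forall c, P c -> P (fun i => a * c i - c i * a)) ->
  forall c, P c -> (exists i, c i != 0) ->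
  exists c', [/\ P c', exists i, c' i != 0 & forall i, centralizer a (c' i)].
Proof.
move=> P_scale P_ad c; have [s] := ubnP #|[set i | c i != 0]|.
elim: s c => // s IH c lt_supp Pc [i0 ci0_neq0].
pose c1 i := c i * (c i0)^-1; pose d i := a * c1 i - c1 i * a.
have c1i0 : c1 i0 = 1 by rewrite /c1 mulrV // D_division.
have [[i d_neq0]|d_eq0] := classic (exists i, d i != 0); last first.
  exists c1; split; [exact: P_scale | by exists i0; rewrite c1i0 oner_neq0 |].
  move=> i; apply/eqP; rewrite -subr_eq0; apply/negPn/negP => d_neq0.
  by apply: d_eq0; exists i.
apply: (IH d); [|exact/P_ad/P_scale|by exists i].
rewrite -ltnS; apply: leq_trans lt_supp; apply: proper_card; apply/properP.
split; last by exists i0; rewrite !inE // /d c1i0 mulr1 mul1r subrr eqxx.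
apply/subsetP => j; rewrite !inE; apply: contra => /eqP cj0.
by rewrite /d /c1 cj0 !mul0r mulr0 subrr.
Qed.

Lemma centralizer_right_free_le (a : D) (p : {poly D}) m (e : 'I_m -> D) :
  p != 0 -> (forall j, central p`_j) -> p.[a] = 0 ->
  right_free (centralizer a) e -> (m <= (size p).-1)%N.
Proof.
move=> p_neq0 p_central pa e_free; rewrite leqNgt; apply/negP => lt_pm.
have [|c [c_nz _ c_eq]] := homogeneous_system_nontrivial
  (N := (size p).-1) (fun k i => e i * a ^+ k) (S := [set: 'I_m]).
  by rewrite cardsT card_ord.
pose annihilates v := forall k, power_sum a e v k = 0.
have scale v r : annihilates v -> annihilates (fun i => v i * r).
  move=> v0 k; rewrite -[RHS](mul0r r) -(v0 k) /power_sum mulr_suml.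
  by apply: eq_bigr => i _; rewrite mulrA.
have ad v : annihilates v -> annihilates (fun i => a * v i - v i * a).
  move=> v0 k; rewrite -[RHS](subrr 0) -{1}(v0 k.+1) -(mul0r a) -(v0 k).
  rewrite /power_sum mulr_suml -sumrB; apply: eq_bigr => i _.
  by rewrite mulrBr exprSr !mulrA.
have [|c' [c'0 [i c'i_neq0] c'_comm]] :=
  ad_stable_centralizing_vector scale ad (c := c) _ c_nz.
  exact: power_sum_eq0 p_neq0 p_central pa c_eq.
move: c'i_neq0; rewrite (e_free c' c'_comm) ?eqxx //.
by have := c'0 0%N; rewrite /power_sum; under eq_bigr do rewrite expr0 mulr1.
Qed.

Lemma noncentral_algebraic_maximal_subring (a : D) (p : {poly D}) :
  p != 0 -> (forall j, central p`_j) -> p.[a] = 0 -> ~ central a ->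
  exists S : D -> Prop, maximal_subring S.
Proof.
move=> p_neq0 p_central pa a_noncentral.
apply: (maximal_subring_of_bounded_right_free (K := centralizer a)
  (N := (size p).-1)).
- exact: centralizer_proper.
- by move=> y; apply: commrV.
- by move=> m e; apply: centralizer_right_free_le.
Qed.

End DivisionRing.

Theorem corollary2p11 (D : unitRingType) :
  is_division_ring D -> algebraic_over_center D ->
  (has_no_maximal_subrings D <->
   ((forall x : D, central x) /\ has_no_maximal_subrings D)).
Proof.
move=> D_division D_algebraic; split=> [no_max|[]//]; split=> // a.
apply: NNPP => a_noncentral; apply: no_max.
have [p [p_neq0 [p_central pa]]] := D_algebraic a.
exact: (noncentral_algebraic_maximal_subring D_division p_neq0 p_central pa
  a_noncentral).
Qed.
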